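(* The variety $\mathsf{V}(S_{(4,467)})$ is the ai-semiring variety defined by the identities $xy\approx yx$, $x^2y\approx xy$, $x^2\approx x^2+x$, $x+xyz\approx x+xyz+xy$, $x_1x_2+x_3x_4\approx x_1x_2+x_3x_4+x_1x_2x_3x_4$.
   Context: An ai-semiring is an algebra $(S,+,\cdot)$ with $(S,+)$ a semilattice, $(S,\cdot)$ a semigroup, and both distributive laws. $\mathsf{V}(S)$ is the variety generated by $S$; ''the ai-semiring variety defined by identities $\Sigma$'' is the class of all ai-semirings satisfying $\Sigma$. $S_{(4,467)}$ has carrier $\{1,2,3,4\}$; addition: $x+x=x$, $2+x=x$, $1+x=1$ for all $x$, $3+4=1$; multiplication (row $a$, column $b$ gives $a\cdot b$): row $1$: $1,3,3,1$; row $2$: $3,2,3,3$; row $3$: $3,3,3,3$; row $4$: $1,3,3,1$. *)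

Record aisemiring {T : Type} (add mul : T -> T -> T) : Prop := {
  ai_add_assoc : forall x y z, add x (add y z) = add (add x y) z;
  ai_add_comm  : forall x y, add x y = add y x;
  ai_add_idem  : forall x, add x x = x;
  ai_mul_assoc : forall x y z, mul x (mul y z) = mul (mul x y) z;
  ai_distr_l   : forall x y z, mul x (add y z) = add (mul x y) (mul x z);
  ai_distr_r   : forall x y z, mul (add x y) z = add (mul x z) (mul y z)
}.

Inductive S4 : Type := e1 | e2 | e3 | e4.

Definition S4add (a b : S4) : S4 :=
  match a, b with
  | e1, _ => e1
  | _, e1 => e1
  | e2, x => x
  | x, e2 => x
  | e3, e3 => e3
  | e4, e4 => e4
  | e3, e4 => e1
  | e4, e3 => e1
  end.

Definition S4mul (a b : S4) : S4 :=
  match a, b with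
  | e1, e1 => e1 | e1, e2 => e3 | e1, e3 => e3 | e1, e4 => e1
  | e2, e1 => e3 | e2, e2 => e2 | e2, e3 => e3 | e2, e4 => e3
  | e3, _ => e3
  | e4, e1 => e1 | e4, e2 => e3 | e4, e3 => e3 | e4, e4 => e1
  end.

(** Membership in the variety V(S_(4,467)) = HSP(S_(4,467)):
    (T,add,mul) is a homomorphic image of a subalgebra of a direct power
    S4^I (for some index type I). *)
Definition InV_S4 {T : Type} (add mul : T -> T -> T) : Prop :=
  exists (I : Type) (P : (I -> S4) -> Prop)
         (Padd : forall f g, P f -> P g -> P (fun i => S4add (f i) (g i)))
         (Pmul : forall f g, P f -> P g -> P (fun i => S4mul (f i) (g i)))
         (h : {f : I -> S4 | P f} -> T),
    (forall t : T, exists u, h u = t) /\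
    (forall u v : {f : I -> S4 | P f},
        h (exist _ _ (Padd _ _ (proj2_sig u) (proj2_sig v)))
          = add (h u) (h v)) /\
    (forall u v : {f : I -> S4 | P f},
        h (exist _ _ (Pmul _ _ (proj2_sig u) (proj2_sig v)))
          = mul (h u) (h v)).

Definition satisfies_Sigma {T : Type} (add mul : T -> T -> T) : Prop :=
  (forall x y, mul x y = mul y x) /\
  (forall x y, mul (mul x x) y = mul x y) /\
  (forall x, mul x x = add (mul x x) x) /\
  (forall x y z, add x (mul (mul x y) z)
                 = add (add x (mul (mul x y) z)) (mul x y)) /\
  (forall x1 x2 x3 x4,
      add (mul x1 x2) (mul x3 x4)
      = add (add (mul x1 x2) (mul x3 x4)) (mul (mul (mul x1 x2) x3) x4)).

From Stdlib Require Import List Classical ClassicalEpsilon.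
From Stdlib Require Import FunctionalExtensionality ProofIrrelevance.
Import ListNotations.

(* Soundness: the identities hold in S = S_(4,467) and, like all identities, pass to products,
   subalgebras and homomorphic images.

   Completeness: let T satisfy them.  Polynomials over the alphabet T (sums of words) induce
   functions (T -> S) -> S, which form a subalgebra of S^(S^T); evaluating a polynomial in T
   is then a well-defined homomorphism onto T as soon as polynomials inducing the same function
   are equal in T.  Since + is a semilattice, it suffices that u <= p in S under every
   valuation forces u <= p in T, for a word u and a polynomial p.  The valuations
   chi_A (e4 on A, e2 off A) show that some word of p has its letters among those of u and,
   if u has length >= 2, that every letter of u occurs in a word of length >= 2 of p.
   Conversely these conditions give u <= p in T: by xy = yx and x^2 y = xy a word of length
   >= 2 only depends on its set of letters; x1x2 + x3x4 >= x1x2x3x4 merges the long words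
   covering u into a single word W <= p; and x + xyz >= xy with x the short word, y = u and
   z = W yields u <= x + W <= p.  For u a single letter, x^2 >= x does the job. *)

Definition nelist (A : Type) : Type := (A * list A)%type.

Definition ne_list {A} (a : nelist A) : list A := fst a :: snd a.
Definition ne_app {A} (a b : nelist A) : nelist A := (fst a, snd a ++ ne_list b).
Definition ne_map {A B} (f : A -> B) (a : nelist A) : nelist B := (f (fst a), map f (snd a)).

Fixpoint foldr1 {A} (op : A -> A -> A) (x : A) (l : list A) : A :=
  match l with [] => x | y :: l' => op x (foldr1 op y l') end.

Definition ne_fold {A} (op : A -> A -> A) (a : nelist A) : A := foldr1 op (fst a) (snd a).

Lemma ne_list_app {A} (a b : nelist A) : ne_list (ne_app a b) = ne_list a ++ ne_list b.
Proof. reflexivity. Qed.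

Lemma ne_list_map {A B} (f : A -> B) a : ne_list (ne_map f a) = map f (ne_list a).
Proof. reflexivity. Qed.

Lemma in_ne_map {A B} (f : A -> B) a y :
  In y (ne_list (ne_map f a)) -> exists z, f z = y /\ In z (ne_list a).
Proof. rewrite ne_list_map; apply in_map_iff. Qed.

Lemma ne_map_app {A B} (f : A -> B) a b : ne_map f (ne_app a b) = ne_app (ne_map f a) (ne_map f b).
Proof. unfold ne_map, ne_app; simpl; rewrite map_app; reflexivity. Qed.

Lemma ne_map_comp {A B C} (f : A -> B) (g : B -> C) a :
  ne_map g (ne_map f a) = ne_map (fun x => g (f x)) a.
Proof. unfold ne_map; simpl; rewrite map_map; reflexivity. Qed.

Lemma ne_map_ext {A B} (f g : A -> B) a : (forall x, f x = g x) -> ne_map f a = ne_map g a.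
Proof. intro E; unfold ne_map; rewrite E, (map_ext f g) by exact E; reflexivity. Qed.

Lemma ne_map_id {A} (a : nelist A) : ne_map id a = a.
Proof. destruct a; unfold ne_map; simpl; rewrite map_id; reflexivity. Qed.

Section Fold.
Context {A : Type} (op : A -> A -> A).

Lemma ne_fold_app :
  (forall x y z, op x (op y z) = op (op x y) z) ->
  forall a b, ne_fold op (ne_app a b) = op (ne_fold op a) (ne_fold op b).
Proof.
  intros assoc [x l] [y k]; unfold ne_fold; simpl.
  revert x; induction l as [|z l IH]; intro x; simpl; [reflexivity|].
  rewrite IH, assoc; reflexivity.
Qed.

Lemma ne_fold_morph {B} (op' : B -> B -> B) (f : A -> B) :
  (forall x y, f (op x y) = op' (f x) (f y)) ->
  forall a, f (ne_fold op a) = ne_fold op' (ne_map f a).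
Proof.
  intros Hf [x l]; unfold ne_fold; simpl.
  revert x; induction l as [|y l IH]; intro x; simpl; [reflexivity|].
  rewrite Hf, IH; reflexivity.
Qed.

Lemma ne_fold_closed (R : A -> Prop) :
  (forall x y, R x -> R y -> R (op x y)) ->
  forall a, (forall x, In x (ne_list a) -> R x) -> R (ne_fold op a).
Proof.
  intros HR [x l]; unfold ne_fold, ne_list; simpl.
  revert x; induction l as [|y l IH]; intros x Hall; simpl.
  - apply Hall; left; reflexivity.
  - apply HR; [apply Hall; left; reflexivity|].
    apply IH; intros z Hz; apply Hall; right; exact Hz.
Qed.

Lemma ne_fold_ideal (Q : A -> Prop) :
  (forall x y, Q x -> Q (op x y)) -> (forall x y, Q y -> Q (op x y)) ->
  forall a x, In x (ne_list a) -> Q x -> Q (ne_fold op a).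
Proof.
  intros HQl HQr [x0 l]; unfold ne_fold, ne_list; simpl.
  revert x0; induction l as [|y l IH]; intros x0 x [<-|Hx] Qx; simpl; auto.
  - destruct Hx.
  - apply HQr, (IH y x Hx Qx).
Qed.

Lemma ne_fold_ideal_factor (Q : A -> Prop) (c : A) :
  (forall x y, Q y -> Q (op x y)) ->
  (forall x, Q (op c x)) -> (forall x, Q (op x c)) ->
  forall a, snd a <> [] -> In c (ne_list a) -> Q (ne_fold op a).
Proof.
  intros HQr Hcl Hcr [x l]; unfold ne_fold, ne_list; simpl.
  revert x; induction l as [|y l IH]; intros x Hl Hc; [congruence|]; simpl.
  destruct Hc as [<-|Hc]; [apply Hcl|].
  destruct l as [|z l].
  - destruct Hc as [<-|[]]; apply Hcr.
  - apply HQr, IH; [congruence|exact Hc].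
Qed.

End Fold.

Record semilattice {X : Type} (add : X -> X -> X) : Prop := {
  sl_assoc : forall x y z, add x (add y z) = add (add x y) z;
  sl_comm : forall x y, add x y = add y x;
  sl_idem : forall x, add x x = x
}.

Lemma aisemiring_semilattice {X} (add mul : X -> X -> X) :
  aisemiring add mul -> semilattice add.
Proof. intros []; constructor; assumption. Qed.

Definition sl_le {X : Type} (add : X -> X -> X) (a b : X) : Prop := add a b = b.

Section SemilatticeOrder.
Context {X : Type} {add : X -> X -> X} (SL : semilattice add).

Lemma sl_le_refl a : sl_le add a a.
Proof. apply (sl_idem _ SL). Qed.

Lemma sl_le_trans a b c : sl_le add a b -> sl_le add b c -> sl_le add a c.
Proof. unfold sl_le; intros Hab Hbc; rewrite <- Hbc, (sl_assoc _ SL), Hab; reflexivity. Qed.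

Lemma sl_le_antisym a b : sl_le add a b -> sl_le add b a -> a = b.
Proof. unfold sl_le; intros Hab Hba; rewrite <- Hab, <- Hba at 1; apply (sl_comm _ SL). Qed.

Lemma sl_le_addl a b : sl_le add a (add a b).
Proof. unfold sl_le; rewrite (sl_assoc _ SL), (sl_idem _ SL); reflexivity. Qed.

Lemma sl_le_addr a b : sl_le add b (add a b).
Proof. rewrite (sl_comm _ SL); apply sl_le_addl. Qed.

Lemma sl_add_le a b c : sl_le add a c -> sl_le add b c -> sl_le add (add a b) c.
Proof. unfold sl_le; intros Hac Hbc; rewrite <- (sl_assoc _ SL), Hbc, Hac; reflexivity. Qed.

Lemma sl_le_ne_fold a x : In x (ne_list a) -> sl_le add x (ne_fold add a).
Proof.
  intro Hx; apply (ne_fold_ideal add (sl_le add x)) with x; auto using sl_le_refl;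
    intros y z H.
  - apply (sl_le_trans _ _ _ H), sl_le_addl.
  - apply (sl_le_trans _ _ _ H), sl_le_addr.
Qed.

Lemma sl_ne_fold_le a c :
  (forall x, In x (ne_list a) -> sl_le add x c) -> sl_le add (ne_fold add a) c.
Proof. apply (ne_fold_closed add (fun x => sl_le add x c)); intros x y; apply sl_add_le. Qed.

End SemilatticeOrder.

(** * Polynomials *)

Definition word (V : Type) : Type := nelist V.
Definition poly (V : Type) : Type := nelist (word V).

Definition nonlinear {V} (w : word V) : Prop := snd w <> [].

Definition occurs_nonlinear {V} (p : poly V) (y : V) : Prop :=
  exists m, In m (ne_list p) /\ nonlinear m /\ In y (ne_list m).

Definition poly_mul {V} (p q : poly V) : poly V :=
  ne_fold ne_app (ne_map (fun m => ne_map (ne_app m) q) p).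

Definition word_eval {V X} (mul : X -> X -> X) (f : V -> X) (w : word V) : X :=
  ne_fold mul (ne_map f w).

Definition poly_eval {V X} (add mul : X -> X -> X) (f : V -> X) (p : poly V) : X :=
  ne_fold add (ne_map (word_eval mul f) p).

Section Evaluation.
Context {V X : Type} {add mul : X -> X -> X} (HS : aisemiring add mul) (f : V -> X).

Lemma word_eval_app a b :
  word_eval mul f (ne_app a b) = mul (word_eval mul f a) (word_eval mul f b).
Proof. unfold word_eval; rewrite ne_map_app; apply ne_fold_app, (ai_mul_assoc _ _ HS). Qed.

Lemma poly_eval_app p q :
  poly_eval add mul f (ne_app p q) = add (poly_eval add mul f p) (poly_eval add mul f q).
Proof. unfold poly_eval; rewrite ne_map_app; apply ne_fold_app, (ai_add_assoc _ _ HS). Qed.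

Lemma poly_eval_word_mul m q :
  poly_eval add mul f (ne_map (ne_app m) q) = mul (word_eval mul f m) (poly_eval add mul f q).
Proof.
  unfold poly_eval; rewrite ne_map_comp.
  rewrite (ne_fold_morph add add (mul (word_eval mul f m))) by apply (ai_distr_l _ _ HS).
  rewrite ne_map_comp; f_equal; apply ne_map_ext; intro n; apply word_eval_app.
Qed.

Lemma poly_eval_mul p q :
  poly_eval add mul f (poly_mul p q) = mul (poly_eval add mul f p) (poly_eval add mul f q).
Proof.
  unfold poly_mul.
  rewrite (ne_fold_morph ne_app add (poly_eval add mul f)) by exact poly_eval_app.
  rewrite ne_map_comp, (ne_map_ext _ (fun m => mul (word_eval mul f m) (poly_eval add mul f q)))
    by exact (fun m => poly_eval_word_mul m q).
  unfold poly_eval at 2; rewrite (ne_fold_morph add add (fun x => mul x (poly_eval add mul f q)))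
    by (intros; apply (ai_distr_r _ _ HS)).
  rewrite ne_map_comp; reflexivity.
Qed.

Lemma word_eval_le_poly_eval w p :
  In w (ne_list p) -> sl_le add (word_eval mul f w) (poly_eval add mul f p).
Proof.
  intro Hw; apply (sl_le_ne_fold (aisemiring_semilattice _ _ HS)).
  rewrite ne_list_map; apply in_map, Hw.
Qed.

End Evaluation.

(** * Soundness *)

Lemma S4_aisemiring : aisemiring S4add S4mul.
Proof. constructor; intros; repeat match goal with x : S4 |- _ => destruct x end; reflexivity. Qed.

Lemma S4_satisfies_Sigma : satisfies_Sigma S4add S4mul.
Proof. repeat split; intros; repeat match goal with x : S4 |- _ => destruct x end; reflexivity. Qed.

Section Transfer.
Context {A B : Type} (addA mulA : A -> A -> A) (addB mulB : B -> B -> B) (h : A -> B).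
Hypothesis h_add : forall a a', h (addA a a') = addB (h a) (h a').
Hypothesis h_mul : forall a a', h (mulA a a') = mulB (h a) (h a').

Lemma satisfies_Sigma_image :
  (forall b, exists a, h a = b) -> satisfies_Sigma addA mulA -> satisfies_Sigma addB mulB.
Proof.
  intros surj HA; repeat split; intros;
    repeat match goal with x : B |- _ => destruct (surj x) as [? <-] end;
    repeat (rewrite <- h_add || rewrite <- h_mul); apply f_equal, HA.
Qed.

Lemma satisfies_Sigma_preimage :
  (forall a a', h a = h a' -> a = a') -> satisfies_Sigma addB mulB -> satisfies_Sigma addA mulA.
Proof.
  intros inj HB; repeat split; intros; apply inj;
    repeat (rewrite h_add || rewrite h_mul); apply HB.
Qed.

End Transfer.

Lemma satisfies_Sigma_power {X} (add mul : X -> X -> X) (I : Type) :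
  satisfies_Sigma add mul ->
  satisfies_Sigma (fun f g (i : I) => add (f i) (g i)) (fun f g (i : I) => mul (f i) (g i)).
Proof. intro HX; repeat split; intros; extensionality i; apply HX. Qed.

Lemma satisfies_Sigma_of_InV_S4 {T} (add mul : T -> T -> T) :
  InV_S4 add mul -> satisfies_Sigma add mul.
Proof.
  intros (I & P & Padd & Pmul & h & surj & h_add & h_mul).
  apply (satisfies_Sigma_image _ _ add mul h h_add h_mul surj).
  apply (satisfies_Sigma_preimage _ _
           (fun f g i => S4add (f i) (g i)) (fun f g i => S4mul (f i) (g i)) (@proj1_sig _ P));
    [reflexivity | reflexivity | exact (eq_sig_hprop (fun x => proof_irrelevance (P x))) |].
  apply satisfies_Sigma_power, S4_satisfies_Sigma.
Qed.

(** * Valuations into S_(4,467) separating a word from a polynomial *)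

Section Separation.
Context {V : Type}.

Definition chi (A : V -> Prop) (z : V) : S4 :=
  if excluded_middle_informative (A z) then e4 else e2.

Definition S4_le_poly (u : word V) (p : poly V) : Prop :=
  forall v : V -> S4, sl_le S4add (word_eval S4mul v u) (poly_eval S4add S4mul v p).

Lemma chi_in (A : V -> Prop) z : A z -> chi A z = e4.
Proof. unfold chi; destruct excluded_middle_informative; [reflexivity|contradiction]. Qed.

Lemma chi_out (A : V -> Prop) z : ~ A z -> chi A z = e2.
Proof. unfold chi; destruct excluded_middle_informative; [contradiction|reflexivity]. Qed.

Ltac S4_cases :=
  intros; repeat match goal with H : _ \/ _ |- _ => destruct H end; subst;
  repeat match goal with x : S4 |- _ => destruct x end; solve [simpl; auto].

Lemma S4_le_contained_word (u : word V) (p : poly V) :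
  S4_le_poly u p -> exists m, In m (ne_list p) /\ incl (ne_list m) (ne_list u).
Proof.
  (* Under chi_(letters of u), u lies in {e1, e4} but p in {e2, e3}. *)
  intro Hle; apply NNPP; intro Hnone.
  set (v := chi (fun z => In z (ne_list u))).
  assert (Hu : word_eval S4mul v u = e1 \/ word_eval S4mul v u = e4).
  { apply (ne_fold_closed S4mul (fun s => s = e1 \/ s = e4)); [S4_cases|].
    intros s Hs; destruct (in_ne_map v u s Hs) as (z & <- & Hz).
    right; apply chi_in, Hz. }
  assert (Hp : poly_eval S4add S4mul v p = e2 \/ poly_eval S4add S4mul v p = e3).
  { apply (ne_fold_closed S4add (fun s => s = e2 \/ s = e3)); [S4_cases|].
    intros s Hs; destruct (in_ne_map _ p s Hs) as (m & <- & Hm).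
    assert (~ incl (ne_list m) (ne_list u)) as Hm' by eauto.
    apply not_all_ex_not in Hm' as (z & Hz); apply imply_to_and in Hz as [Hzm Hzu].
    apply (ne_fold_ideal S4mul (fun s => s = e2 \/ s = e3)) with (v z); [S4_cases|S4_cases| |].
    - rewrite ne_list_map; apply in_map, Hzm.
    - left; apply chi_out, Hzu. }
  specialize (Hle v).
  destruct Hu as [Hu|Hu]; rewrite Hu in Hle;
    destruct Hp as [Hp|Hp]; rewrite Hp in Hle; discriminate.
Qed.

Lemma S4_le_nonlinear_cover (u : word V) (p : poly V) y :
  nonlinear u -> S4_le_poly u p -> In y (ne_list u) ->
  occurs_nonlinear p y.
Proof.
  (* Under chi_{y}, u lies in {e1, e3} but p in {e2, e4}. *)
  intros Nu Hle Hy; apply NNPP; intro Hnone.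
  set (v := chi (fun z => z = y)).
  assert (Hu : word_eval S4mul v u = e1 \/ word_eval S4mul v u = e3).
  { apply (ne_fold_ideal_factor S4mul (fun s => s = e1 \/ s = e3) e4); [S4_cases..| |].
    - unfold nonlinear in Nu; destruct u as [a [|b l]]; [contradiction|discriminate].
    - replace e4 with (v y) by (apply chi_in; reflexivity).
      rewrite ne_list_map; apply in_map, Hy. }
  assert (Hp : poly_eval S4add S4mul v p = e2 \/ poly_eval S4add S4mul v p = e4).
  { apply (ne_fold_closed S4add (fun s => s = e2 \/ s = e4)); [S4_cases|].
    intros s Hs; destruct (in_ne_map _ p s Hs) as ([a l] & <- & Hm).
    destruct (classic (In y (ne_list (a, l)))) as [Hym|Hym].
    - destruct l as [|b l];
        [|exfalso; apply Hnone; exists (a, b :: l); repeat split; auto; discriminate].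
      destruct Hym as [<-|[]]; right; apply chi_in; reflexivity.
    - left; apply (ne_fold_closed S4mul (fun s => s = e2)); [S4_cases|].
      intros t Ht; destruct (in_ne_map v _ t Ht) as (z & <- & Hz).
      apply chi_out; intros ->; contradiction. }
  specialize (Hle v).
  destruct Hu as [Hu|Hu]; rewrite Hu in Hle;
    destruct Hp as [Hp|Hp]; rewrite Hp in Hle; discriminate.
Qed.

End Separation.

(** * Ai-semirings satisfying the identities *)

Section SigmaAlgebra.
Context {T : Type} {add mul : T -> T -> T}.
Hypotheses (HS : aisemiring add mul) (HSig : satisfies_Sigma add mul).

Let SL : semilattice add := aisemiring_semilattice _ _ HS.
Let mul_assoc := ai_mul_assoc _ _ HS.
Let mul_comm : forall x y, mul x y = mul y x := proj1 HSig.
Let mul_sq_l : forall x y, mul (mul x x) y = mul x y := proj1 (proj2 HSig).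
Let sq_add : forall x, mul x x = add (mul x x) x := proj1 (proj2 (proj2 HSig)).
Let Sigma4 : forall x y z,
    add x (mul (mul x y) z) = add (add x (mul (mul x y) z)) (mul x y)
  := proj1 (proj2 (proj2 (proj2 HSig))).
Let Sigma5 : forall x1 x2 x3 x4, add (mul x1 x2) (mul x3 x4)
      = add (add (mul x1 x2) (mul x3 x4)) (mul (mul (mul x1 x2) x3) x4)
  := proj2 (proj2 (proj2 (proj2 HSig))).

Local Notation le := (sl_le add).
Local Notation val := (word_eval mul id).
Local Notation pval := (poly_eval add mul id).

Lemma val_eq (w : word T) : val w = ne_fold mul w.
Proof. unfold word_eval; rewrite ne_map_id; reflexivity. Qed.

Lemma mul_letter_absorb (w : word T) x :
  nonlinear w -> In x (ne_list w) -> mul x (val w) = val w.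
Proof.
  rewrite val_eq; destruct w as [a l]; unfold nonlinear, ne_fold, ne_list; simpl.
  revert a; induction l as [|b l IH]; intros a Hl Hx; [congruence|]; simpl.
  destruct Hx as [->|Hx]; [rewrite mul_assoc, mul_sq_l; reflexivity|].
  destruct l as [|c l].
  - destruct Hx as [->|[]]; simpl.
    rewrite (mul_comm a x), mul_assoc, mul_sq_l; reflexivity.
  - rewrite mul_assoc, (mul_comm x a), <- mul_assoc, IH; [reflexivity|discriminate|exact Hx].
Qed.

Lemma mul_word_absorb (w1 w2 : word T) :
  nonlinear w2 -> incl (ne_list w1) (ne_list w2) -> mul (val w1) (val w2) = val w2.
Proof.
  intros N2; rewrite (val_eq w1); destruct w1 as [a l]; unfold ne_fold, ne_list; simpl.
  revert a; induction l as [|b l IH]; intros a Hincl; simpl.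
  - apply mul_letter_absorb; [exact N2 | apply Hincl; left; reflexivity].
  - rewrite <- mul_assoc, IH, mul_letter_absorb; auto.
    + apply Hincl; left; reflexivity.
    + intros z Hz; apply Hincl; right; exact Hz.
Qed.

Lemma val_content_eq (w1 w2 : word T) :
  nonlinear w1 -> nonlinear w2 ->
  incl (ne_list w1) (ne_list w2) -> incl (ne_list w2) (ne_list w1) -> val w1 = val w2.
Proof.
  intros N1 N2 H12 H21.
  rewrite <- (mul_word_absorb w2 w1), mul_comm; auto using mul_word_absorb.
Qed.

Lemma le_sq x : le x (mul x x).
Proof. unfold sl_le; rewrite (sl_comm _ SL); symmetry; apply sq_add. Qed.

Lemma val_nonlinear (w : word T) : nonlinear w -> exists a b, val w = mul a b.
Proof.
  rewrite val_eq; destruct w as [a [|b l]]; intro N; [now contradiction N|].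
  eexists _, _; reflexivity.
Qed.

Lemma le_val_app (w1 w2 : word T) :
  nonlinear w1 -> nonlinear w2 -> le (val (ne_app w1 w2)) (add (val w1) (val w2)).
Proof.
  intros N1 N2; rewrite (word_eval_app HS).
  destruct (val_nonlinear w1 N1) as (a & b & ->), (val_nonlinear w2 N2) as (c & d & ->).
  unfold sl_le; rewrite (sl_comm _ SL), mul_assoc; symmetry; apply Sigma5.
Qed.

Lemma le_Sigma4 x y z : le (mul x y) (add x (mul (mul x y) z)).
Proof. unfold sl_le; rewrite (sl_comm _ SL); symmetry; apply Sigma4. Qed.

Lemma nonlinear_cover (u : word T) (p : poly T) :
  (forall y, In y (ne_list u) -> occurs_nonlinear p y) ->
  exists W, nonlinear W /\ le (val W) (pval p) /\ incl (ne_list u) (ne_list W).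
Proof.
  destruct u as [x l]; revert x; induction l as [|y l IH]; intros x Hcov.
  - destruct (Hcov x (or_introl eq_refl)) as (m & Hm & Nm & Hx).
    exists m; split; [exact Nm|split; [apply (word_eval_le_poly_eval HS), Hm|]].
    intros z [<-|[]]; exact Hx.
  - destruct (IH y) as (W & NW & LW & IW); [intros z Hz; apply Hcov; right; exact Hz|].
    destruct (Hcov x (or_introl eq_refl)) as (m & Hm & Nm & Hx).
    exists (ne_app m W).
    split; [unfold nonlinear, ne_app; simpl; destruct (snd m); discriminate|].
    split.
    + apply (sl_le_trans SL _ _ _ (le_val_app m W Nm NW)), (sl_add_le SL); auto.
      apply (word_eval_le_poly_eval HS), Hm.
    + rewrite ne_list_app; intros z [<-|Hz]; apply in_or_app;
        [left; exact Hx | right; apply IW, Hz].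
Qed.

Lemma nonlinear_word_le_poly (u : word T) (p : poly T) :
  nonlinear u ->
  (exists m0, In m0 (ne_list p) /\ incl (ne_list m0) (ne_list u)) ->
  (forall y, In y (ne_list u) -> occurs_nonlinear p y) ->
  le (val u) (pval p).
Proof.
  intros Nu (m0 & Hm0 & Im0) Hcov.
  destruct (nonlinear_cover u p Hcov) as (W & NW & LW & IW).
  (* x + xyz >= xy with x = m0, y = u, z = W, where m0 u = u and u W = W. *)
  pose proof (le_Sigma4 (val m0) (val u) (val W)) as H.
  rewrite (mul_word_absorb m0 u Nu Im0), (mul_word_absorb u W NW IW) in H.
  apply (sl_le_trans SL _ _ _ H), (sl_add_le SL);
    [apply (word_eval_le_poly_eval HS), Hm0 | exact LW].
Qed.

Lemma letter_le_poly x (p : poly T) :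
  (exists m, In m (ne_list p) /\ incl (ne_list m) [x]) -> le x (pval p).
Proof.
  intros ([a l] & Hm & Im).
  assert (a = x) as -> by (destruct (Im a (or_introl eq_refl)) as [->|[]]; reflexivity).
  destruct l as [|b l]; [exact (word_eval_le_poly_eval HS id _ p Hm)|].
  apply (sl_le_trans SL _ _ _ (le_sq x)); change (mul x x) with (val (x, [x])).
  rewrite (val_content_eq (x, [x]) (x, b :: l)); try discriminate.
  - apply (word_eval_le_poly_eval HS), Hm.
  - intros z [<-|[<-|[]]]; left; reflexivity.
  - intros z Hz; destruct (Im z Hz) as [<-|[]]; left; reflexivity.
Qed.

Lemma word_le_of_S4_le (u : word T) (p : poly T) : S4_le_poly u p -> le (val u) (pval p).
Proof.
  intro Hle; destruct (S4_le_contained_word u p Hle) as (m0 & Hm0 & Im0).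
  destruct u as [x [|y l]].
  - apply letter_le_poly; eauto.
  - apply nonlinear_word_le_poly; eauto; [discriminate|].
    intros z Hz; apply (S4_le_nonlinear_cover (x, y :: l) p z); auto; discriminate.
Qed.

Lemma poly_le_of_S4_eq (p q : poly T) :
  (forall v, poly_eval S4add S4mul v p = poly_eval S4add S4mul v q) -> le (pval q) (pval p).
Proof.
  intro E; apply (sl_ne_fold_le SL); intros s Hs.
  destruct (in_ne_map _ q s Hs) as (w & <- & Hw).
  apply word_le_of_S4_le; intro v; rewrite E; apply (word_eval_le_poly_eval S4_aisemiring), Hw.
Qed.

Lemma poly_eq_of_S4_eq (p q : poly T) :
  (forall v, poly_eval S4add S4mul v p = poly_eval S4add S4mul v q) -> pval p = pval q.
Proof.
  intro E; apply (sl_le_antisym SL); apply poly_le_of_S4_eq; intro v; [symmetry|]; apply E.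
Qed.

End SigmaAlgebra.

(** * Completeness *)

Definition poly_fun {T} (p : poly T) : (T -> S4) -> S4 := fun v => poly_eval S4add S4mul v p.

Definition is_poly_fun {T} (F : (T -> S4) -> S4) : Prop := exists p : poly T, F = poly_fun p.

Lemma is_poly_fun_add {T} (F G : (T -> S4) -> S4) :
  is_poly_fun F -> is_poly_fun G -> is_poly_fun (fun v => S4add (F v) (G v)).
Proof.
  intros [p ->] [q ->]; exists (ne_app p q); extensionality v.
  symmetry; apply (poly_eval_app S4_aisemiring).
Qed.

Lemma is_poly_fun_mul {T} (F G : (T -> S4) -> S4) :
  is_poly_fun F -> is_poly_fun G -> is_poly_fun (fun v => S4mul (F v) (G v)).
Proof.
  intros [p ->] [q ->]; exists (poly_mul p q); extensionality v.
  symmetry; apply (poly_eval_mul S4_aisemiring).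
Qed.

Section Completeness.
Context {T : Type} {add mul : T -> T -> T}.
Hypotheses (HS : aisemiring add mul) (HSig : satisfies_Sigma add mul).

Definition eval_poly_fun (F : {F : (T -> S4) -> S4 | is_poly_fun F}) : T :=
  poly_eval add mul id (proj1_sig (constructive_indefinite_description _ (proj2_sig F))).

Lemma eval_poly_fun_spec F p :
  proj1_sig F = poly_fun p -> eval_poly_fun F = poly_eval add mul id p.
Proof.
  intro E; unfold eval_poly_fun.
  destruct constructive_indefinite_description as [p' E']; simpl.
  apply (poly_eq_of_S4_eq HS HSig); intro v.
  change (poly_fun p' v = poly_fun p v); rewrite <- E', E; reflexivity.
Qed.

Lemma eval_poly_fun_add F G :
  eval_poly_fun (exist _ _ (is_poly_fun_add _ _ (proj2_sig F) (proj2_sig G)))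
  = add (eval_poly_fun F) (eval_poly_fun G).
Proof.
  destruct F as [F [p Ep]], G as [G [q Eq]].
  rewrite (eval_poly_fun_spec (exist _ F _) p Ep), (eval_poly_fun_spec (exist _ G _) q Eq).
  rewrite <- (poly_eval_app HS); apply eval_poly_fun_spec; simpl; rewrite Ep, Eq.
  extensionality v; symmetry; apply (poly_eval_app S4_aisemiring).
Qed.

Lemma eval_poly_fun_mul F G :
  eval_poly_fun (exist _ _ (is_poly_fun_mul _ _ (proj2_sig F) (proj2_sig G)))
  = mul (eval_poly_fun F) (eval_poly_fun G).
Proof.
  destruct F as [F [p Ep]], G as [G [q Eq]].
  rewrite (eval_poly_fun_spec (exist _ F _) p Ep), (eval_poly_fun_spec (exist _ G _) q Eq).
  rewrite <- (poly_eval_mul HS); apply eval_poly_fun_spec; simpl; rewrite Ep, Eq.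
  extensionality v; symmetry; apply (poly_eval_mul S4_aisemiring).
Qed.

Lemma InV_S4_of_satisfies_Sigma : InV_S4 add mul.
Proof.
  exists (T -> S4), is_poly_fun, is_poly_fun_add, is_poly_fun_mul, eval_poly_fun.
  split; [|split; [exact eval_poly_fun_add | exact eval_poly_fun_mul]].
  intro t; exists (exist _ (poly_fun ((t, []), [])) (ex_intro _ _ eq_refl)).
  exact (eval_poly_fun_spec (exist _ _ _) ((t, []), []) eq_refl).
Qed.

End Completeness.

Theorem proposition6p5 (T : Type) (add mul : T -> T -> T) :
  aisemiring add mul -> (InV_S4 add mul <-> satisfies_Sigma add mul).
Proof.
  intro HS; split.
  - apply satisfies_Sigma_of_InV_S4.
  - apply (InV_S4_of_satisfies_Sigma HS).
Qed.
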